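(* The number of occurrences of the endhered pattern $21$ (resp. $12$) in a uniformly random matching of size $n$ converges in distribution, as $n\to\infty$, to a Poisson law with parameter $1/2$; precisely, for every fixed $k\ge0$, $$\frac{a_{n,k}}{(2n-1)!!}\to\frac{e^{-1/2}}{2^k k!}\qquad(n\to\infty),$$ where $a_{n,k}$ is the number of matchings of size $n$ with exactly $k$ occurrences of the pattern.
   Context: A matching of size $n$ is a set of $n$ arcs $(a,b)$ with $1\le a<b\le 2n$ such that each point of $\{1,\dots,2n\}$ belongs to exactly one arc; there are $(2n-1)!!$ of them. An occurrence of the endhered pattern $21$ in a matching is a pair of arcs of the form $(i+1,j+2),(i+2,j+1)$; an occurrence of $12$ is a pair of arcs of the form $(i+1,j+1),(i+2,j+2)$. The number of occurrences is the number of such pairs. *)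

From mathcomp Require Import all_boot.
Set Implicit Arguments. Unset Strict Implicit. Unset Printing Implicit Defensive.

(* Points {1,...,2n} are represented 0-based as 'I_(2n) (point p <-> p+1). *)
Definition is_matching (n : nat) (M : {set 'I_(2 * n) * 'I_(2 * n)}) : bool :=
  [forall e in M, (e.1 < e.2)%N] &&
  [forall x : 'I_(2 * n), #|[set e in M | (e.1 == x) || (e.2 == x)]| == 1].

Definition has_arc n (M : {set 'I_(2 * n) * 'I_(2 * n)}) (a b : nat) : bool :=
  [exists e in M, (val e.1 == a) && (val e.2 == b)].

Inductive pattern := P21 | P12.

(* Occurrences: 21 = arcs (i+1,j+2),(i+2,j+1); 12 = arcs (i+1,j+1),(i+2,j+2)
   (1-based).
   Each occurrence (an unordered pair of arcs) is determined by (i,j). *)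
Definition occ_at (p : pattern) n (M : {set 'I_(2 * n) * 'I_(2 * n)}) (i j : nat) : bool :=
  match p with
  | P21 => has_arc M i j.+1 && has_arc M i.+1 j
  | P12 => has_arc M i j && has_arc M i.+1 j.+1
  end.

Definition occurrences (p : pattern) n (M : {set 'I_(2 * n) * 'I_(2 * n)}) : nat :=
  #|[set q : 'I_(2 * n) * 'I_(2 * n) | occ_at p M q.1 q.2]|.

Definition a_count (p : pattern) (n k : nat) : nat :=
  #|[set M : {set 'I_(2 * n) * 'I_(2 * n)} | is_matching M && (occurrences p M == k)]|.

(* (2n-1)!! = 1 * 3 * ... * (2n-1) *)
Definition dfact (n : nat) : nat := \prod_(i < n) (2 * i + 1).

From Stdlib Require Import Reals Factorial.
From Stdlib Require Import Lra.
From Coquelicot Require Import Coquelicot.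
From mathcomp Require Import all_boot zify.

Set Implicit Arguments. Unset Strict Implicit. Unset Printing Implicit Defensive.
Local Open Scope nat_scope.

Lemma dfactS m : dfact m.+1 = dfact m * (2 * m + 1).
Proof. by rewrite /dfact big_ord_recr. Qed.

Lemma dfact_gt0 m : 0 < dfact m.
Proof. by elim: m => [|m IH]; rewrite ?dfactS ?muln_gt0 ?IH ?addn1 // /dfact big_ord0. Qed.

Lemma card_set_nat (T : finType) (P : pred T) : #|[set x | P x]| = \sum_x P x.
Proof. by rewrite -sum1dep_card big_mkcond; apply: eq_bigr => x _; case: (P x). Qed.

Lemma sum_nat_bool (T : finType) (D : {pred T}) (P : pred T) :
  \sum_(x in D) P x = #|[set x in D | P x]|.
Proof. by rewrite -sum1dep_card big_mkcondr; apply: eq_bigr => x _; case: (P x). Qed.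

Section PerfectMatchings.
Variable N : nat.
Local Notation point := 'I_N.
Local Notation arc := (point * point)%type.
Implicit Types (U : {set point}) (A B M : {set arc}) (e : arc) (x : point).

Definition touches e x := (e.1 == x) || (e.2 == x).
Definition deg A x := #|[set e in A | touches e x]|.
Definition arcs_in U A := [forall e in A, [&& e.1 < e.2, e.1 \in U & e.2 \in U]].
Definition perfect_matching U M := arcs_in U M && [forall x in U, deg M x == 1].
Definition partial_matching U A := arcs_in U A && [forall x in U, deg A x <= 1].

Lemma deg_setU1 e B x : e \notin B -> deg (e |: B) x = touches e x + deg B x.
Proof.
move=> eB; rewrite /deg.
have -> : [set f in e |: B | touches f x] =
    if touches e x then e |: [set f in B | touches f x] else [set f in B | touches f x].
  apply/setP => f; case: ifP => te; rewrite !inE; case: eqP => [->|] //=; by rewrite ?te ?andbF.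
by case: ifP => // _; rewrite cardsU1 inE (negbTE eB).
Qed.

Lemma leq_deg A M x : A \subset M -> deg A x <= deg M x.
Proof.
move=> AM; apply: subset_leq_card; apply/subsetP => e; rewrite !inE => /andP[eA ->].
by rewrite (subsetP AM).
Qed.

Lemma deg_gt1 M e f x : e \in M -> f \in M -> e != f -> touches e x -> touches f x ->
  1 < deg M x.
Proof.
move=> eM fM nef te tf; apply: leq_trans (_ : #|[set e; f]| <= _); first by rewrite cards2 nef.
by apply: subset_leq_card; apply/subsetP => g; rewrite !inE => /orP[]/eqP->; apply/andP.
Qed.

Lemma perfect_partial_matching U M : perfect_matching U M -> partial_matching U M.
Proof.
case/andP=> inM /forall_inP dM; apply/andP; split=> //.
by apply/forall_inP => x xU; rewrite (eqP (dM x xU)).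
Qed.

Lemma partial_matching_touch U A e f x : partial_matching U A ->
  e \in A -> f \in A -> x \in U -> touches e x -> touches f x -> e = f.
Proof.
case/andP => _ /forall_inP dA eA fA xU te tf; apply/eqP; apply: contraTT (dA x xU) => nef.
by rewrite -ltnNge (deg_gt1 eA fA nef te tf).
Qed.

Lemma partial_matching_sub U A M :
  perfect_matching U M -> A \subset M -> partial_matching U A.
Proof.
case/andP=> /forall_inP inM /forall_inP dM AM; apply/andP; split.
  by apply/forall_inP => e eA; apply: inM; apply: (subsetP AM).
by apply/forall_inP => x xU; rewrite -(eqP (dM x xU)) leq_deg.
Qed.

Section RemoveArc.
Variables (U : {set point}) (a : arc).
Hypotheses (a12 : a.1 < a.2) (a1U : a.1 \in U) (a2U : a.2 \in U).
Let U' := U :\: [set a.1; a.2].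

Lemma card_setD_arc : #|U'| = #|U| - 2.
Proof.
rewrite cardsD (setIidPr _); last by apply/subsetP => x; rewrite !inE => /orP[]/eqP->.
by rewrite cards2 -(inj_eq val_inj) (ltn_eqF a12).
Qed.

Lemma partial_matchingD1 A : partial_matching U A -> a \in A -> partial_matching U' (A :\ a).
Proof.
move=> pA aA; case/andP: (pA) => /forall_inP inA /forall_inP dA; apply/andP; split; last first.
  apply/forall_inP => x; rewrite !inE => /andP[_ xU].
  exact: leq_trans (leq_deg _ (subsetDl _ _)) (dA x xU).
apply/forall_inP => e; rewrite !inE => /andP[nea eA].
case/and3P: (inA e eA) => -> e1U e2U; rewrite e1U e2U !andbT /=.
have disj y : y \in U -> touches e y -> ~~ touches a y.
  move=> yU te; apply: contra nea => ta; apply/eqP.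
  exact: partial_matching_touch pA eA aA yU te ta.
have := disj _ e1U; have := disj _ e2U; rewrite /touches !eqxx !orbT /=.
by move=> /(_ isT) h2 /(_ isT) h1; rewrite !(eq_sym e.1) !(eq_sym e.2) h1 h2.
Qed.

Lemma perfect_matchingD1 M : perfect_matching U M -> a \in M -> perfect_matching U' (M :\ a).
Proof.
move=> pM aM; have /andP[inM' _] := partial_matchingD1 (perfect_partial_matching pM) aM.
case/andP: pM => _ /forall_inP dM; apply/andP; split=> //.
apply/forall_inP => x; rewrite !inE negb_or => /andP[/andP[xa1 xa2] xU].
have := dM x xU; rewrite -{1}(setD1K aM) deg_setU1 ?setD11 //.
by rewrite /touches !(eq_sym _ x) (negbTE xa1) (negbTE xa2).
Qed.

Lemma arc_notin_matchingD B : arcs_in U' B -> a \notin B.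
Proof. by move=> /forall_inP inB; apply/negP => /inB /and3P[_]; rewrite !inE eqxx. Qed.

Lemma perfect_matchingU1 B : perfect_matching U' B -> perfect_matching U (a |: B).
Proof.
case/andP => inB /forall_inP dB; have aB := arc_notin_matchingD inB.
move/forall_inP: inB => inB; apply/andP; split.
  apply/forall_inP => e; rewrite !inE => /orP[/eqP -> | eB]; first by rewrite a12 a1U a2U.
  by case/and3P: (inB e eB) => -> /setDP[-> _] /setDP[-> _].
apply/forall_inP => x xU; rewrite deg_setU1 //.
have [xa | xa] := boolP (x \in [set a.1; a.2]).
  suff -> : deg B x = 0 by move: xa; rewrite !inE /touches => /orP[]/eqP ->; rewrite eqxx ?orbT.
  apply/eqP; rewrite cards_eq0; apply/eqP/setP => e; rewrite !inE; apply/negP => /andP[eB te].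
  case/and3P: (inB e eB) => _ /setDP[_ h1] /setDP[_ h2].
  by case/orP: te => /eqP ex; [move: h1 | move: h2]; rewrite ex xa.
rewrite (eqP (dB x _)); last by rewrite inE xa.
by move: xa; rewrite !inE /touches !(eq_sym _ x) => /norP[/negbTE -> /negbTE ->].
Qed.

Lemma card_perfect_matching_arc (Q : pred {set arc}) :
  #|[set M | [&& perfect_matching U M, a \in M & Q M]]| =
  #|[set B | perfect_matching U' B && Q (a |: B)]|.
Proof.
have aB B : perfect_matching U' B -> a \notin B by case/andP => /arc_notin_matchingD ->.
rewrite -[RHS](@card_in_imset _ _ (fun B => a |: B)); last first.
  move=> B1 B2; rewrite !inE => /andP[/aB a1 _] /andP[/aB a2 _] e12.
  by rewrite -(setU1K a1) e12 setU1K.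
apply: eq_card => M; rewrite inE; apply/idP/imsetP.
  case/and3P => pM aM QM; exists (M :\ a); last by rewrite setD1K.
  by rewrite inE perfect_matchingD1 ?setD1K.
by case=> B; rewrite inE => /andP[pB QB] ->; rewrite perfect_matchingU1 // setU11.
Qed.

End RemoveArc.

Lemma perfect_matching0 M : perfect_matching set0 M = (M == set0).
Proof.
apply/idP/eqP => [/andP[/forall_inP inM _]|->].
  by apply/setP => e; rewrite inE; apply/negP => /inM /and3P[_]; rewrite inE.
by apply/andP; split; apply/forall_inP => x; rewrite inE.
Qed.

(* The least point [u] of [U] is the smaller endpoint of its arc. *)
Lemma arc_of_min U M u : perfect_matching U M -> u \in U -> {in U, forall x, u <= x} ->
  \sum_(v in U :\ u) ((u, v) \in M) = 1.
Proof.
case/andP => /forall_inP inM /forall_inP dM uU umin.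
rewrite -(eqP (dM u uU)) sum_nat_bool -[LHS](@card_in_imset _ _ (pair u)) /=;
  last by move=> x y _ _ [].
apply: eq_card => e; rewrite inE; apply/imsetP/idP => [[v] | /andP[eM te]].
  by rewrite !inE -andbA => /and3P[_ _ uvM] ->; rewrite uvM /touches eqxx.
case/and3P: (inM e eM) => lt e1U e2U; case/orP: te => /eqP eu; last first.
  by have := umin _ e1U; rewrite -eu leqNgt lt.
exists e.2; last by rewrite -eu -surjective_pairing.
by rewrite !inE e2U -eu -surjective_pairing eM andbT -(inj_eq val_inj) (gtn_eqF lt).
Qed.

Lemma card_perfect_matching m U : #|U| = 2 * m -> #|[set M | perfect_matching U M]| = dfact m.
Proof.
elim: m U => [|m IH] U cardU.
  rewrite muln0 in cardU; rewrite (cards0_eq cardU).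
  rewrite /dfact big_ord0; apply: (eq_card1 (x := set0)) => M.
  by rewrite !inE perfect_matching0.
have [u0 u0U] : {u0 | u0 \in U} by apply/sigW/card_gt0P; rewrite cardU muln_gt0.
case: (arg_minnP (fun x : point => val x) u0U) => u uU umin.
have {}uU : u \in U := uU.
have cardUu : #|U :\ u| = (2 * m).+1 by move: cardU; rewrite (cardsD1 u) uU add1n mulnS add2n => -[].
rewrite card_set_nat (eq_bigr (fun M => \sum_(v in U :\ u) (perfect_matching U M && ((u, v) \in M))));
  last first.
  move=> M _; case pM: (perfect_matching U M); last by rewrite big1.
  by rewrite (arc_of_min pM).
rewrite exchange_big /= (eq_bigr (fun _ => dfact m)) ?sum_nat_const ?cardUu ?dfactS ?addn1 1?mulnC //.
move=> v; rewrite !inE => /andP[vu vU].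
have uv : u < v by rewrite ltn_neqAle umin // andbT; apply: contra vu => /eqP/val_inj ->.
rewrite -(IH (U :\: [set u; v])); last by rewrite (card_setD_arc (a := (u, v))) //= cardU; lia.
rewrite -card_set_nat (@eq_card _ _ [set M | [&& perfect_matching U M, (u, v) \in M & predT M]]);
  last by move=> M; rewrite !inE andbT.
by rewrite (card_perfect_matching_arc (a := (u, v))) //; apply: eq_card => B; rewrite !inE andbT.
Qed.

Lemma card_perfect_matching_sup m U A : #|U| = 2 * m -> partial_matching U A ->
  #|[set M | perfect_matching U M && (A \subset M)]| = dfact (m - #|A|).
Proof.
move cardA : #|A| => k; elim: k A m U cardA => [|k IH] A m U cardA cardU pA.
  rewrite (cards0_eq cardA) subn0 -(card_perfect_matching cardU).
  by apply: eq_card => M; rewrite !inE sub0set andbT.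
have [a aA] : {a | a \in A} by apply/sigW/card_gt0P; rewrite cardA.
case/andP: (pA) => /forall_inP inA _; case/and3P: (inA a aA) => a12 a1U a2U.
have cardU' := card_setD_arc a12 a1U a2U.
have -> : m - k.+1 = m.-1 - k by lia.
rewrite -(IH (A :\ a) m.-1 (U :\: [set a.1; a.2])); first last.
- exact: partial_matchingD1.
- by rewrite cardU' cardU; lia.
- by move: cardA; rewrite (cardsD1 a) aA; lia.
rewrite (@eq_card _ _ [set M | [&& perfect_matching U M, a \in M & A \subset M]]); last first.
  by move=> M; rewrite !inE; case AM: (A \subset M); rewrite ?andbF // (subsetP AM a aA).
by rewrite card_perfect_matching_arc //; apply: eq_card => B; rewrite !inE subDset.
Qed.

End PerfectMatchings.

Lemma is_matchingE n (M : {set 'I_(2 * n) * 'I_(2 * n)}) : is_matching M = perfect_matching setT M.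
Proof.
by congr (_ && _); apply: eq_forallb => x; rewrite !inE ?andbT.
Qed.

Section Matchings.
Variable n : nat.
Implicit Types A : {set 'I_(2 * n) * 'I_(2 * n)}.

Lemma card_matching_sup A : partial_matching setT A ->
  #|[set M | is_matching M && (A \subset M)]| = dfact (n - #|A|).
Proof.
move=> pA; rewrite -(card_perfect_matching_sup (m := n) _ pA) ?cardsT ?card_ord //.
by apply: eq_card => M; rewrite !inE is_matchingE.
Qed.

Lemma card_matching_sup_le A : #|[set M | is_matching M && (A \subset M)]| <= dfact (n - #|A|).
Proof.
have [M0 | noM] := set_0Vmem [set M | is_matching M && (A \subset M)].
  by rewrite M0 cards0.
case: noM => M; rewrite inE is_matchingE => /andP[mM AM].
by rewrite card_matching_sup // (partial_matching_sub mM AM).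
Qed.

End Matchings.

Lemma card_bigcup_disjoint (I T : finType) (S : {set I}) (F : I -> {set T}) k :
  {in S, forall i, #|F i| = k} -> {in S &, forall i j, i != j -> [disjoint F i & F j]} ->
  #|\bigcup_(i in S) F i| = k * #|S|.
Proof.
move=> cardF disjF; pose G i := if i \in S then F i else set0.
rewrite (big_mkcond (fun i => i \in S)) -/(\bigcup_i G i) -sum1_card.
rewrite partition_disjoint_bigcup => [|i j nij]; last first.
  rewrite /G -setI_eq0; case: ifP => iS; case: ifP => jS; rewrite ?set0I ?setI0 //.
  by rewrite setI_eq0 disjF.
rewrite (eq_bigr (fun i => if i \in S then k else 0)) => [|i _]; last first.
  by rewrite sum1_card /G; case: ifP => iS; rewrite ?cardF ?cards0.
by rewrite -big_mkcond sum_nat_const mulnC.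
Qed.

Section Sites.
Variables (p : pattern) (n : nat).
Local Notation point := 'I_(2 * n).
Local Notation arc := (point * point)%type.
Implicit Types (i j a b x : nat) (M : {set arc}) (s t : point * point) (S : {set point * point}).

Definition occ_arc1 i j : nat * nat := if p is P21 then (i, j.+1) else (i, j).
Definition occ_arc2 i j : nat * nat := if p is P21 then (i.+1, j) else (i.+1, j.+1).
Definition is_occ_arc i j (c : nat * nat) := (c == occ_arc1 i j) || (c == occ_arc2 i j).

(* Occurrences at [(i.-1, prev_col j)] and [(i, j)] share the arc [occ_arc1 i j]:
   they are consecutive in a chain of occurrences. *)
Definition prev_col j := if p is P21 then j.+1 else j.-1.

Definition far x y := (x + 3 < y) || (y + 3 < x).
Definition separated i j i' j' := [&& far i i', far i j', far j i' & far j j'].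

Lemma occ_arc_lt i j a b : i + 2 <= j -> is_occ_arc i j (a, b) -> a < b.
Proof. by rewrite /is_occ_arc /occ_arc1 /occ_arc2; case: p; rewrite !xpair_eqE; lia. Qed.

Lemma occ_arc_common i j i' j' a b : is_occ_arc i j (a, b) -> is_occ_arc i' j' (a, b) ->
  (i = i' /\ j = j') \/ (0 < i /\ i' = i.-1 /\ j' = prev_col j) \/
  (0 < i' /\ i = i'.-1 /\ j = prev_col j').
Proof. by rewrite /is_occ_arc /occ_arc1 /occ_arc2 /prev_col; case: p; rewrite !xpair_eqE; lia. Qed.

Lemma occ_arcs_apart i j a b a' b' x : i + 2 <= j ->
  is_occ_arc i j (a, b) -> is_occ_arc i j (a', b') ->
  (x == a) || (x == b) -> (x == a') || (x == b') -> a = a' /\ b = b'.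
Proof. by rewrite /is_occ_arc /occ_arc1 /occ_arc2; case: p; rewrite !xpair_eqE; lia. Qed.

Lemma separated_occ_arcs_apart i j i' j' a b a' b' x : separated i j i' j' ->
  is_occ_arc i j (a, b) -> is_occ_arc i' j' (a', b') ->
  (x == a) || (x == b) -> (x == a') || (x == b') -> False.
Proof. by rewrite /separated /far /is_occ_arc /occ_arc1 /occ_arc2; case: p; rewrite !xpair_eqE; lia. Qed.

Lemma prev_arc_not_occ_arc i j : i + 2 <= j -> ~~ is_occ_arc i j (occ_arc1 i.-1 (prev_col j)).
Proof. by rewrite /is_occ_arc /occ_arc1 /occ_arc2 /prev_col; case: p; rewrite !xpair_eqE; lia. Qed.

Lemma prev_arc_not_separated_occ_arc i j i' j' : separated i j i' j' ->
  ~~ is_occ_arc i' j' (occ_arc1 i.-1 (prev_col j)).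
Proof.
by rewrite /separated /far /is_occ_arc /occ_arc1 /occ_arc2 /prev_col; case: p; rewrite !xpair_eqE; lia.
Qed.

Definition arc_at (c : nat * nat) : {set arc} := [set e | (val e.1, val e.2) == c].
Definition site_arcs s := arc_at (occ_arc1 s.1 s.2) :|: arc_at (occ_arc2 s.1 s.2).
Definition prev_arc s := arc_at (occ_arc1 s.1.-1 (prev_col s.2)).

Definition occurs M s := occ_at p M s.1 s.2.
Definition chained M s := (0 < s.1) && occ_at p M s.1.-1 (prev_col s.2).
Definition chain_starts M := [set s | occurs M s && ~~ chained M s].

Definition admissible s := (s.1 + 2 <= s.2) && (s.2.+1 < 2 * n).
Definition sparse S := [forall s in S, admissible s] &&
  [forall s in S, forall t in S, (s != t) ==> separated s.1 s.2 t.1 t.2].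
Definition family_arcs S := \bigcup_(s in S) site_arcs s.

Lemma in_site_arcs s e : (e \in site_arcs s) = is_occ_arc s.1 s.2 (val e.1, val e.2).
Proof. by rewrite !inE. Qed.

Lemma occ_atE M i j : occ_at p M i j =
  has_arc M (occ_arc1 i j).1 (occ_arc1 i j).2 && has_arc M (occ_arc2 i j).1 (occ_arc2 i j).2.
Proof. by rewrite /occ_arc1 /occ_arc2; case: p. Qed.

Lemma has_arc_at M c : has_arc M c.1 c.2 = (arc_at c :&: M != set0).
Proof.
case: c => a b; apply/existsP/set0Pn => [[e /andP[eM ec]] | [e]].
  by exists e; rewrite !inE eM andbT xpair_eqE.
by rewrite !inE xpair_eqE => /andP[/andP[e1 e2] eM]; exists e; rewrite eM e1 e2.
Qed.

Lemma card_arc_at_le1 c : #|arc_at c| <= 1.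
Proof.
apply/card_le1_eqP => [[x1 x2] [y1 y2]]; rewrite !inE /= => /eqP exc /eqP eyc.
by move: exc; rewrite -eyc => -[/val_inj -> /val_inj ->].
Qed.

Lemma has_arc_sub M c : has_arc M c.1 c.2 -> arc_at c \subset M /\ #|arc_at c| = 1.
Proof.
rewrite has_arc_at => /set0Pn[e]; rewrite inE => /andP[ec eM]; split.
  by apply/subsetP => f fc; rewrite -(card_le1_eqP (card_arc_at_le1 c) f e fc ec).
by apply/eqP; rewrite eqn_leq card_arc_at_le1 card_gt0; apply/set0Pn; exists e.
Qed.

Lemma arc_at_in c (c1 : c.1 < 2 * n) (c2 : c.2 < 2 * n) :
  arc_at c = [set (Ordinal c1, Ordinal c2)].
Proof.
apply/setP => -[x y]; rewrite !inE; case: c c1 c2 => a b /= c1 c2.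
by rewrite !xpair_eqE.
Qed.

Lemma admissible_occ_arcs s : admissible s ->
  [/\ (occ_arc1 s.1 s.2).1 < 2 * n, (occ_arc1 s.1 s.2).2 < 2 * n,
      (occ_arc2 s.1 s.2).1 < 2 * n & (occ_arc2 s.1 s.2).2 < 2 * n].
Proof. by rewrite /admissible /occ_arc1 /occ_arc2; case: p => /=; split; lia. Qed.

Lemma occursE M s : admissible s -> occurs M s = (site_arcs s \subset M).
Proof.
case/admissible_occ_arcs => h1 h2 h3 h4.
rewrite /occurs occ_atE !has_arc_at /site_arcs (arc_at_in h1 h2) (arc_at_in h3 h4).
by rewrite subUset !sub1set !setI_eq0 !disjoints1 !negbK.
Qed.

Lemma card_site_arcs s : admissible s -> #|site_arcs s| = 2.
Proof.
case/andP=> ij jn; have [h1 h2 h3 h4] := admissible_occ_arcs (introT andP (conj ij jn)).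
rewrite /site_arcs (arc_at_in h1 h2) (arc_at_in h3 h4) cards2.
suff -> : (Ordinal h1, Ordinal h2) != (Ordinal h3, Ordinal h4) by [].
by apply/negP => /eqP[]; rewrite /occ_arc1 /occ_arc2; case: p => /=; lia.
Qed.

Lemma occurs_admissible M s : is_matching M -> occurs M s -> admissible s.
Proof.
rewrite is_matchingE => mM; have pM := perfect_partial_matching mM.
case/andP: mM => /forall_inP ltM _; rewrite /occurs occ_atE.
case/andP => /existsP[e /and3P[eM /eqP e1 /eqP e2]] /existsP[f /and3P[fM /eqP f1 /eqP f2]].
have /and3P[lt_e _ _] := ltM e eM; have /and3P[lt_f _ _] := ltM f fM.
have e2n := ltn_ord e.2.
have f2n := ltn_ord f.2.
(* For the pattern 12 the two arcs (i, i + 1) and (i + 1, i + 2) would share a point. *)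
have ef : val e.2 <> val f.1.
  move=> ef; have te : touches e e.2 by rewrite /touches eqxx orbT.
  have tf : touches f e.2 by rewrite /touches -(inj_eq val_inj) ef eqxx.
  move: lt_e ef; rewrite (partial_matching_touch pM eM fM (in_setT _) te tf).
  by case: f {eM fM f1 f2 tf lt_f f2n} => [[x ?] [y ?]] /=; lia.
move: e1 e2 f1 f2 lt_e lt_f e2n f2n ef; rewrite /admissible /occ_arc1 /occ_arc2.
by case: e {eM} => [[x1 ?] [y1 ?]]; case: f {fM} => [[x2 ?] [y2 ?]] /=; case: p => /=; lia.
Qed.

Lemma chain_starts_disjoint M s t : s \in chain_starts M -> t \in chain_starts M -> s != t ->
  [disjoint site_arcs s & site_arcs t].
Proof.
rewrite !inE /occurs => /andP[os ncs] /andP[ot nct] st; rewrite disjoint_subset.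
apply/subsetP => e; rewrite !inE => es; apply/negP => et.
case: (occ_arc_common es et) => [[e1 e2] | [[i0 [e1 e2]] | [i0 [e1 e2]]]].
- by move: st; rewrite [s]surjective_pairing [t]surjective_pairing xpair_eqE
    -!(inj_eq (@ord_inj _)) e1 e2 !eqxx.
- by move: ncs; rewrite /chained i0 -e1 -e2 ot.
- by move: nct; rewrite /chained i0 -e1 -e2 os.
Qed.

Lemma sparse_admissible S s : sparse S -> s \in S -> admissible s.
Proof. by case/andP => /forall_inP admS _; apply: admS. Qed.

Lemma sparse_separated S s t : sparse S -> s \in S -> t \in S -> s != t -> separated s.1 s.2 t.1 t.2.
Proof. by case/andP => _ /forall_inP sepS sS tS; move/forall_inP/(_ t tS)/implyP: (sepS s sS). Qed.

Lemma card_family_arcs S : {in S, forall s, admissible s} ->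
  {in S &, forall s t, s != t -> [disjoint site_arcs s & site_arcs t]} ->
  #|family_arcs S| = 2 * #|S|.
Proof. by move=> admS; apply: card_bigcup_disjoint => s sS; rewrite card_site_arcs ?admS. Qed.

Lemma card_sparse_family_arcs S : sparse S -> #|family_arcs S| = 2 * #|S|.
Proof.
move=> spS; apply: card_family_arcs => [s | s t sS tS st]; first exact: sparse_admissible.
rewrite disjoint_subset; apply/subsetP => e; rewrite !inE => es; apply/negP => et.
by apply: (separated_occ_arcs_apart (sparse_separated spS sS tS st) es et (x := val e.1)); rewrite eqxx.
Qed.

Lemma sparse_partial_matching S : sparse S -> partial_matching setT (family_arcs S).
Proof.
move=> spS; apply/andP; split.
  apply/forall_inP => e /bigcupP[s sS]; rewrite in_site_arcs !in_setT !andbT.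
  by apply: occ_arc_lt; case/andP: (sparse_admissible spS sS).
apply/forall_inP => x _; apply/card_le1_eqP => e f; rewrite !inE /touches -!(inj_eq val_inj) /=.
case/andP => /bigcupP[s sS]; rewrite in_site_arcs => es te.
case/andP => /bigcupP[t tS]; rewrite in_site_arcs => ft tf.
rewrite !(eq_sym _ (val x)) in te tf.
have [est | st] := eqVneq s t; first subst t.
  have [/val_inj e1 /val_inj e2] := occ_arcs_apart (proj1 (andP (sparse_admissible spS sS))) es ft te tf.
  by rewrite [e]surjective_pairing [f]surjective_pairing e1 e2.
by case: (separated_occ_arcs_apart (sparse_separated spS sS tS st) es ft te tf).
Qed.

Lemma sparse_prev_arc_disjoint S s : sparse S -> s \in S -> [disjoint prev_arc s & family_arcs S].
Proof.
move=> spS sS; rewrite disjoint_subset; apply/subsetP => e; rewrite !inE => /eqP ep.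
apply/bigcupP => -[t tS]; rewrite in_site_arcs ep; apply/negP.
have [est | st] := eqVneq s t; first subst t.
  by apply: prev_arc_not_occ_arc; case/andP: (sparse_admissible spS sS).
exact: prev_arc_not_separated_occ_arc (sparse_separated spS sS tS st).
Qed.

End Sites.

Lemma card_union_bound (X I : finType) (D : {pred I}) (P : pred X) (Q : I -> pred X) :
  (forall x, P x -> exists2 i, i \in D & Q i x) ->
  #|[set x | P x]| <= \sum_(i in D) #|[set x | Q i x]|.
Proof.
move=> cover; rewrite card_set_nat (eq_bigr _ (fun i _ => card_set_nat (Q i))) exchange_big.
apply: leq_sum => x _; case Px: (P x) => //; case: (cover x Px) => i iD Qix.
by rewrite (bigD1 i) //= Qix.
Qed.

Lemma card_setU_le (T : finType) (A B : {set T}) : #|A :|: B| <= #|A| + #|B|.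
Proof. by rewrite cardsU leq_subr. Qed.

Lemma card_draws_pair (T : finType) (B : {set T}) (x y : T) r : x != y ->
  #|[set S : {set T} | [&& x \in S, y \in S, S \subset B & #|S| == r]]| <= 'C(#|B|, r - 2).
Proof.
move=> xy; rewrite -cards_draws -(@card_in_imset _ _ (fun S => S :\: [set x; y])); last first.
  move=> S1 S2; rewrite !inE => /and4P[x1 y1 _ _] /and4P[x2 y2 _ _] e12.
  apply/setP => z; have [/[!inE] /orP[] /eqP -> | zxy] := boolP (z \in [set x; y]).
  - by rewrite x1 x2.
  - by rewrite y1 y2.
  by have := congr1 (fun X : {set T} => z \in X) e12; rewrite /= !in_setD (negbTE zxy).
apply: subset_leq_card; apply/subsetP => _ /imsetP[S /[!inE] /and4P[xS yS SB /eqP cS] ->].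
rewrite (subset_trans (subsetDl _ _) SB) /= cardsD -cS (setIidPr _) ?cards2 ?xy //.
by apply/subsetP => z /[!inE] /orP[] /eqP ->.
Qed.

Section ChainStartMoments.
Variables (p : pattern) (n : nat).
Local Notation point := 'I_(2 * n).
Local Notation site := (point * point)%type.
Local Notation chain_starts := (@chain_starts p n).
Local Notation occurs := (@occurs p n).
Local Notation chained := (@chained p n).
Local Notation site_arcs := (@site_arcs p n).
Local Notation family_arcs := (@family_arcs p n).
Local Notation prev_arc := (@prev_arc p n).
Implicit Types (S : {set site}) (M : {set point * point}).

Definition admissible_sites := [set s : site | admissible s].
Definition fmoment r := \sum_(M | is_matching M) 'C(#|chain_starts M|, r).
Definition starting_in S := #|[set M | is_matching M && (S \subset chain_starts M)]|.

Lemma fmoment_starting_in r : fmoment r = \sum_(S : {set site} | #|S| == r) starting_in S.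
Proof.
rewrite /fmoment (eq_bigr (fun M => \sum_(S : {set site}) ((S \subset chain_starts M) && (#|S| == r))));
  last first.
  by move=> M _; rewrite -cards_draws card_set_nat.
rewrite exchange_big [RHS]big_mkcond; apply: eq_bigr => S _.
rewrite /starting_in card_set_nat big_mkcond /=.
by case: (#|S| == r); [apply: eq_bigr => M _ | rewrite big1 // => M _];
  case: (is_matching M); rewrite ?andbT ?andbF.
Qed.

Lemma card_draws_admissible r :
  'C(#|admissible_sites|, r) = \sum_(S : {set site} | #|S| == r) (S \subset admissible_sites).
Proof. by rewrite -cards_draws sum_nat_bool; apply: eq_card => S; rewrite !inE andbC. Qed.

Lemma starting_in_le S : starting_in S <= (S \subset admissible_sites) * dfact (n - 2 * #|S|).
Proof.
rewrite /starting_in.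
have [-> | [M0]] := set_0Vmem [set M : {set point * point} | is_matching M && (S \subset chain_starts M)].
  by rewrite cards0.
rewrite inE => /andP[mM0 startsM0].
have admS : {in S, forall s, admissible s}.
  move=> s /(subsetP startsM0); rewrite inE => /andP[os _].
  exact: occurs_admissible mM0 os.
have -> : S \subset admissible_sites by apply/subsetP => s sS; rewrite inE admS.
rewrite mul1n -(card_family_arcs (p := p) admS); last first.
  by move=> s t sS tS; apply: chain_starts_disjoint; apply: (subsetP startsM0).
apply: leq_trans _ (card_matching_sup_le (family_arcs S)).
apply: subset_leq_card; apply/subsetP => M; rewrite !inE => /andP[-> startsM] /=.
apply/bigcupsP => s sS; move: (subsetP startsM s sS); rewrite inE => /andP[os _].
by rewrite -occursE ?admS.
Qed.

Lemma fmoment_le r : fmoment r <= 'C(#|admissible_sites|, r) * dfact (n - 2 * r).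
Proof.
rewrite fmoment_starting_in card_draws_admissible big_distrl.
by apply: leq_sum => S /eqP <-; apply: starting_in_le.
Qed.

(* A sparse family fails to consist of chain starts only when, in addition to its own arcs,
   the matching contains the arc [prev_arc s] of some member [s]. *)
Lemma starting_in_ge S : sparse S ->
  dfact (n - 2 * #|S|) <= starting_in S + #|S| * dfact (n - 2 * #|S| - 1).
Proof.
move=> spS; have cardF := card_sparse_family_arcs p spS.
rewrite -cardF -(card_matching_sup (sparse_partial_matching p spS)).
pose Q s M := is_matching M && (family_arcs S :|: prev_arc s \subset M) && (#|prev_arc s| == 1).
set A := [set M | _]; rewrite -(setID A [set M | S \subset chain_starts M]).
apply: leq_trans (card_setU_le _ _) _; apply: leq_add.
  by apply: subset_leq_card; apply/subsetP => M; rewrite !inE => /andP[/andP[-> _] ->].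
apply: leq_trans (_ : _ <= \sum_(s in S) #|[set M | Q s M]|) _.
  apply: card_union_bound => M; rewrite !inE => /andP[/subsetPn[s sS nstart] /andP[mM FM]].
  exists s => //; rewrite /Q mM subUset FM /=.
  have os : occurs M s.
    by rewrite occursE ?(sparse_admissible spS) //; apply: subset_trans FM; apply: bigcup_sup.
  move: nstart; rewrite inE os negbK => /andP[_]; rewrite occ_atE => /andP[/has_arc_sub[-> ->] _].
  by [].
rewrite -sum1_card big_distrl /=; apply: leq_sum => s sS; rewrite mul1n.
have [prev1 | nprev1] := eqVneq #|prev_arc s| 1; last first.
  rewrite (_ : [set M | Q s M] = set0) ?cards0 //.
  by apply/setP => M; rewrite !inE /Q (negbTE nprev1) andbF.
have -> : [set M | Q s M] =
    [set M | is_matching M && (family_arcs S :|: prev_arc s \subset M)].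
  by apply/setP => M; rewrite !inE /Q prev1 andbT.
apply: leq_trans (card_matching_sup_le _) _.
rewrite cardsU prev1 (disjoint_setI0 _) ?cards0; first by rewrite subn0 addn1 subnS subn1.
by rewrite disjoint_sym; apply: sparse_prev_arc_disjoint.
Qed.

Definition non_sparse r :=
  #|[set S : {set site} | [&& #|S| == r, S \subset admissible_sites & ~~ sparse S]]|.

Lemma fmoment_ge r :
  'C(#|admissible_sites|, r) * dfact (n - 2 * r) <=
  fmoment r + 'C(#|admissible_sites|, r) * (r * dfact (n - 2 * r - 1)) +
  non_sparse r * dfact (n - 2 * r).
Proof.
have -> : non_sparse r =
    \sum_(S : {set site} | #|S| == r) ((S \subset admissible_sites) && ~~ sparse S).
  by rewrite sum_nat_bool; apply: eq_card => S; rewrite !inE.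
rewrite card_draws_admissible fmoment_starting_in !big_distrl -!big_split /=.
apply: leq_sum => S /eqP <-; have [admS | _] /= := boolP (S \subset admissible_sites); last by [].
have [spS | _] /= := boolP (sparse S); last by rewrite !mul1n leq_addl.
by rewrite !mul1n mul0n addn0 starting_in_ge.
Qed.

Definition close_pairs :=
  [set q : site * site | (q.1 != q.2) && ~~ separated q.1.1 q.1.2 q.2.1 q.2.2].

Lemma non_sparse_le r : non_sparse r <= (1 < r) * (#|close_pairs| * 'C(#|admissible_sites|, r - 2)).
Proof.
have [r_le1 | r_gt1] := leqP r 1.
  rewrite leqn0 cards_eq0; apply/eqP/setP => S; rewrite !inE.
  apply/negP => /and3P[/eqP cS admS /negP]; apply; apply/andP; split.
    by apply/forall_inP => s /(subsetP admS); rewrite inE.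
  apply/forall_inP => s sS; apply/forall_inP => t tS; apply/implyP => st.
  by move: st; rewrite (card_le1_eqP _ s t sS tS) ?eqxx // cS.
rewrite mul1n -sum_nat_const.
apply: leq_trans (_ : _ <= \sum_(q in close_pairs) #|[set S : {set site} |
  [&& q.1 \in S, q.2 \in S, S \subset admissible_sites & #|S| == r]]|) _.
  apply: card_union_bound => S /and3P[cS admS].
  rewrite negb_and; have -> /= : [forall s in S, admissible s].
    by apply/forall_inP => s /(subsetP admS); rewrite inE.
  case/forall_inPn => s sS /forall_inPn[t tS]; rewrite negb_imply => /andP[st nsep].
  by exists (s, t); rewrite ?inE ?st ?nsep //= sS tS admS cS.
by apply: leq_sum => q; rewrite inE => /andP[qq _]; apply: card_draws_pair.
Qed.

Definition near a := [set x : point | ~~ far a x].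

Lemma card_near a : #|near a| <= 7.
Proof.
pose f (x : point) : 'I_7 := inord (x + 3 - a).
have inj : {in near a &, injective f}.
  move=> x y; rewrite !inE /far => hx hy /(congr1 (@nat_of_ord _)).
  by rewrite !inordK; [move=> h; apply: val_inj => /=; lia | lia | lia].
by have := leq_card_in f (near a) inj; rewrite card_ord.
Qed.

Lemma card_not_separated (s : site) : #|[set t : site | ~~ separated s.1 s.2 t.1 t.2]| <= 56 * n.
Proof.
have sub : [set t : site | ~~ separated s.1 s.2 t.1 t.2] \subset
    (setX (near s.1) setT :|: setX setT (near s.1)) :|: (setX (near s.2) setT :|: setX setT (near s.2)).
  apply/subsetP => -[x y]; rewrite !inE /separated /=.
  by case: (far s.1 x); case: (far s.1 y); case: (far s.2 x); case: (far s.2 y).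
apply: leq_trans (subset_leq_card sub) _.
apply: leq_trans (card_setU_le _ _) _.
apply: leq_trans (leq_add (card_setU_le _ _) (card_setU_le _ _)) _.
rewrite !cardsX !cardsT !card_ord.
by have := card_near s.1; have := card_near s.2; nia.
Qed.

Lemma card_close_pairs : #|close_pairs| <= 224 * n ^ 3.
Proof.
apply: leq_trans (_ : #|[set q : site * site | ~~ separated q.1.1 q.1.2 q.2.1 q.2.2]| <= _).
  by apply: subset_leq_card; apply/subsetP => q; rewrite !inE => /andP[].
rewrite card_set_nat -(pair_bigA _ (fun s t : site => ~~ separated s.1 s.2 t.1 t.2 : nat)) /=.
apply: leq_trans (_ : \sum_(s : site) 56 * n <= _).
  by apply: leq_sum => s _; rewrite -card_set_nat card_not_separated.
by rewrite sum_nat_const card_prod card_ord; nia.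
Qed.

End ChainStartMoments.

Section ChainedOccurrences.
Variables (p : pattern) (n : nat).
Local Notation point := 'I_(2 * n).
Local Notation site := (point * point)%type.
Local Notation chain_starts := (@chain_starts p n).
Local Notation occurs := (@occurs p n).
Local Notation chained := (@chained p n).
Local Notation site_arcs := (@site_arcs p n).
Local Notation prev_arc := (@prev_arc p n).
Implicit Types (M : {set point * point}).

Definition has_chain M := [exists s, occurs M s && chained M s].
Definition chain_matchings := [set M | is_matching M && has_chain M].
Definition start_count k := #|[set M | is_matching M && (#|chain_starts M| == k)]|.

Lemma chain_startsE M : ~~ has_chain M -> chain_starts M = [set s | occurs M s].
Proof.
move/existsPn => nchain; apply/setP => s; rewrite !inE.
by case os: (occurs M s) (nchain s) => //=; rewrite os.
Qed.

Lemma card_chain_matchings : #|chain_matchings| <= 4 * n ^ 2 * dfact (n - 3).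
Proof.
apply: leq_trans (_ : _ <= \sum_(s : site) #|[set M | [&& is_matching M, occurs M s & chained M s]]|) _.
  apply: card_union_bound => M /andP[mM /existsP[s /andP[os cs]]].
  by exists s; rewrite // mM os cs.
apply: leq_trans (_ : _ <= \sum_(s : site) dfact (n - 3)) _; last first.
  by rewrite sum_nat_const card_prod card_ord; nia.
apply: leq_sum => s _.
have [-> | [M0]] := set_0Vmem [set M | [&& is_matching M, occurs M s & chained M s]].
  by rewrite cards0.
rewrite inE => /and3P[mM0 os0 /andP[_]].
rewrite occ_atE => /andP[/has_arc_sub[_ prev1] _].
have adm := occurs_admissible mM0 os0.
have cardA : #|site_arcs s :|: prev_arc s| = 3.
  rewrite cardsU card_site_arcs // prev1 (disjoint_setI0 _) ?cards0 //.
  rewrite disjoint_sym disjoint_subset; apply/subsetP => e; rewrite !inE => /eqP ep.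
  by rewrite -/(is_occ_arc _ _ _ _) ep prev_arc_not_occ_arc //; case/andP: adm.
rewrite -cardA; apply: leq_trans (card_matching_sup_le _).
apply: subset_leq_card; apply/subsetP => M; rewrite !inE => /and3P[-> os /andP[_]].
rewrite subUset -occursE // os occ_atE => /andP[/has_arc_sub[-> _] _].
by [].
Qed.

Lemma a_count_le k : a_count p n k <= start_count k + #|chain_matchings|.
Proof.
apply: leq_trans (card_setU_le _ _); apply: subset_leq_card; apply/subsetP => M.
rewrite !inE => /andP[mM occM]; rewrite mM /=.
have [_ | nchain] := boolP (has_chain M); first by rewrite orbT.
by rewrite orbF chain_startsE.
Qed.

Lemma start_count_le k : start_count k <= a_count p n k + #|chain_matchings|.
Proof.
apply: leq_trans (card_setU_le _ _); apply: subset_leq_card; apply/subsetP => M.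
rewrite !inE => /andP[mM startsM]; rewrite mM /=.
have [_ | nchain] := boolP (has_chain M); first by rewrite orbT.
by rewrite orbF /occurrences -(chain_startsE nchain).
Qed.

End ChainedOccurrences.

Lemma sum_ord_ltn m k : k <= m -> \sum_(i < m) (i < k) = k.
Proof.
move=> km; rewrite -[RHS]card_ord -sum1_card (big_ord_widen _ (fun _ => 1) km) [RHS]big_mkcond.
by apply: eq_bigr => i _; case: (i < k).
Qed.

Lemma sum_ord_pred m : \sum_(j < m.+1) j.-1 = 'C(m, 2).
Proof. by rewrite big_ord_recl /= add0n -bin2_sum big_mkord. Qed.

Lemma card_admissible_sites n : #|admissible_sites n| = n.-1 * (2 * n - 3).
Proof.
rewrite card_set_nat -(pair_bigA _ (fun i j : 'I_(2 * n) => admissible (i, j) : nat)) exchange_big /=.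
transitivity (\sum_(j < 2 * n | j < (2 * n).-1) j.-1).
  rewrite [RHS]big_mkcond; apply: eq_bigr => j _; rewrite /admissible /=.
  have -> : (j.+1 < 2 * n) = (j < (2 * n).-1) by apply/idP/idP; lia.
  case: ifP => jn; last by rewrite big1 // => i _; rewrite andbF.
  rewrite -(@sum_ord_ltn (2 * n) j.-1); last by lia.
  by apply: eq_bigr => i _; rewrite andbT; congr nat_of_bool; apply/idP/idP; lia.
rewrite -big_ord_widen ?leq_pred //; case: n => [|n]; first by rewrite big_ord0.
rewrite (_ : (2 * n.+1).-1 = (2 * n).+1) ?sum_ord_pred ?bin2; last lia.
by rewrite -mulnA mul2n doubleK; congr (_ * _); lia.
Qed.

Lemma ffactnD y k j : y ^_ (k + j) = y ^_ k * (y - k) ^_ j.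
Proof.
by rewrite !ffact_prod big_split_ord; congr (_ * _); apply: eq_bigr => i _; rewrite subnDA.
Qed.

Lemma mul_bin_bin y k j : 'C(k + j, k) * 'C(y, k + j) = 'C(y, k) * 'C(y - k, j).
Proof.
have fact_kj := bin_fact (leq_addr j k); rewrite addKn in fact_kj.
apply/eqP; rewrite -(eqn_pmul2r (_ : 0 < k`! * j`!)) ?muln_gt0 ?fact_gt0 //; apply/eqP.
rewrite mulnAC fact_kj mulnC bin_ffact ffactnD -bin_ffact -(bin_ffact (y - k)).
by rewrite mulnACA.
Qed.

Definition bonferroni_sum (P : pred nat) k t (c : nat -> nat) :=
  \sum_(j < t.+1 | P j) 'C(k + j, k) * c (k + j).

Lemma bonferroni_sum0 P k c : bonferroni_sum P k 0 c = P 0 * c k.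
Proof. by rewrite /bonferroni_sum big_mkcond big_ord1 /= addn0 binn mul1n; case: (P 0) => /=; rewrite ?mul1n. Qed.

Lemma bonferroni_sumS P k t c :
  bonferroni_sum P k t.+1 c = bonferroni_sum P k t c + P t.+1 * ('C(k + t.+1, k) * c (k + t.+1)).
Proof. by rewrite /bonferroni_sum big_mkcond [in RHS]big_mkcond big_ord_recr /=; case: (P t.+1) => /=; rewrite ?mul1n ?mul0n ?addn0. Qed.

(* The partial sums of the inclusion-exclusion series for "exactly k" overshoot and undershoot
   alternately, by [rest]. *)
Lemma bonferroni_identity y k t (rest := 'C(y, k) * 'C((y - k).-1, t) * (k < y)) :
  bonferroni_sum (fun j => ~~ odd j) k t (binomial y) + odd t * rest =
  (y == k) + bonferroni_sum odd k t (binomial y) + ~~ odd t * rest.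
Proof.
rewrite {}/rest; elim: t => [|t IH].
  rewrite !bonferroni_sum0 /= !mul1n !mul0n addn0 bin0 muln1.
  case: ltngtP => [ky | yk | ->] /=; first by rewrite muln1.
  - by rewrite bin_small.
  - by rewrite binn muln0.
rewrite !bonferroni_sumS mul_bin_bin /=; move: IH.
case: ltngtP => [ky | yk | <-]; last first.
- by rewrite subnn !bin0n /= !muln0 !addn0.
- by rewrite bin_small // !mul0n !muln0 !addn0.
case def_m: (y - k) => [|m]; first by lia.
rewrite binS !mulnDr /= !muln1.
by case: (odd t) => /=; lia.
Qed.

Lemma bonferroni_even y k t : ~~ odd t ->
  (y == k) + bonferroni_sum odd k t (binomial y) <= bonferroni_sum (fun j => ~~ odd j) k t (binomial y).
Proof. by move=> t_even; have := bonferroni_identity y k t; rewrite (negbTE t_even) /=; lia. Qed.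

Lemma bonferroni_odd y k t : odd t ->
  bonferroni_sum (fun j => ~~ odd j) k t (binomial y) <= (y == k) + bonferroni_sum odd k t (binomial y).
Proof. by move=> t_odd; have := bonferroni_identity y k t; rewrite t_odd /=; lia. Qed.

Unset Implicit Arguments.
Local Open Scope R_scope.

Lemma INR_muln (a b : nat) : INR (a * b) = INR a * INR b. Proof. exact: mult_INR. Qed.
Lemma INR_addn (a b : nat) : INR (a + b) = INR a + INR b. Proof. exact: plus_INR. Qed.
Lemma INR_subn (a b : nat) : (b <= a)%N -> INR (a - b) = INR a - INR b.
Proof. by move/leP; apply: minus_INR. Qed.
Lemma INR_expn (a b : nat) : INR (a ^ b) = INR a ^ b.
Proof. by elim: b => [|b IH]; rewrite ?expn0 // expnS INR_muln IH. Qed.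

Lemma dfact_INR_gt0 m : 0 < INR (dfact m).
Proof. by apply: lt_0_INR; apply/ltP; apply: dfact_gt0. Qed.

Lemma fact_factorial m : fact m = m`!.
Proof. by elim: m => //= m ->; rewrite factS. Qed.


Lemma eventually_INR_gt (M : R) : eventually (fun n => M < INR n).
Proof. by have /is_lim_seq_spec := is_lim_seq_INR; apply. Qed.

Lemma lim_inv_INR : is_lim_seq (fun n => / INR n) 0.
Proof. exact: (is_lim_seq_inv _ _ is_lim_seq_INR). Qed.

Lemma lim_inv_pow d : (0 < d)%N -> is_lim_seq (fun n => / INR n ^ d) 0.
Proof.
move=> d_gt0; apply: (is_lim_seq_le_le_loc (fun _ => 0) _ (fun n => / INR n)).
- exists 1%N => n /leP n_gt0; have n1 : 1 <= INR n by apply: (le_INR 1); apply/leP.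
  split; first by apply: Rlt_le; apply: Rinv_0_lt_compat; apply: pow_lt; lra.
  apply: Rinv_le_contravar; first lra.
  by rewrite -{1}(pow_1 (INR n)); apply: Rle_pow => //; apply/leP.
- exact: is_lim_seq_const.
- exact: lim_inv_INR.
Qed.

Lemma lim_affine_ratio a : is_lim_seq (fun n => INR n / (2 * INR n - a)) (1 / 2).
Proof.
apply: (is_lim_seq_ext_loc (fun n => / (2 - a * / INR n))).
  apply: filter_imp (eventually_INR_gt (Rabs a)) => n /[dup] na.
  have := Rle_abs a; have := Rabs_pos a => *; field; lra.
have lim2 : is_lim_seq (fun n => 2 - a * / INR n) 2.
  have := is_lim_seq_minus' _ _ _ _ (is_lim_seq_const 2) (is_lim_seq_scal_l _ a _ lim_inv_INR).
  by rewrite /= Rmult_0_r Rminus_0_r.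
have := is_lim_seq_inv _ _ lim2; rewrite /Rdiv Rmult_1_l; apply; by case; lra.
Qed.

Lemma lim_dfact_ratio m :
  is_lim_seq (fun n => INR n ^ m * INR (dfact (n - m)) / INR (dfact n)) ((1 / 2) ^ m).
Proof.
elim: m => [|m IH].
  apply: (is_lim_seq_ext (fun _ => 1)) => [n|]; last exact: is_lim_seq_const.
  by rewrite subn0 /=; have := dfact_INR_gt0 n => ?; field; lra.
apply: (is_lim_seq_ext_loc (fun n => INR n ^ m * INR (dfact (n - m)) / INR (dfact n) *
                                     (INR n / (2 * INR n - INR (2 * m + 1))))).
  exists m.+1 => n /leP n_gt_m.
  have -> : (n - m = (n - m.+1).+1)%N by lia.
  have den : 2 * INR n - INR (2 * m + 1) = INR (2 * (n - m.+1) + 1).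
    by rewrite !INR_addn INR_subn ?S_INR /=; [ring | lia].
  rewrite dfactS INR_muln den /=.
  have := dfact_INR_gt0 n; have := dfact_INR_gt0 (n - m.+1).
  have : 0 < INR (2 * (n - m.+1) + 1) by apply: lt_0_INR; lia.
  by move=> *; field; lra.
have := is_lim_seq_mult' _ _ _ _ IH (lim_affine_ratio (INR (2 * m + 1))).
by rewrite Rmult_comm.
Qed.

Lemma lim_dfact_ratio_lt e m : (e < m)%N ->
  is_lim_seq (fun n => INR n ^ e * INR (dfact (n - m)) / INR (dfact n)) 0.
Proof.
move=> em; apply: (is_lim_seq_ext_loc (fun n => INR n ^ m * INR (dfact (n - m)) / INR (dfact n) *
                                                / INR n ^ (m - e))).
  exists 1%N => n /leP n_gt0; have : 0 < INR n by apply: lt_0_INR; apply/ltP.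
  have -> : INR n ^ m = INR n ^ (m - e) * INR n ^ e by rewrite -pow_add; congr (_ ^ _); lia.
  move=> ?; have := dfact_INR_gt0 n.
  by move=> ?; field; split; [lra | apply: pow_nonzero; lra].
have := is_lim_seq_mult' _ _ _ _ (lim_dfact_ratio m) (lim_inv_pow (m - e) _).
by rewrite Rmult_0_r subn_gt0; apply.
Qed.

Lemma INR_subn_ge (a b : nat) : INR a - INR b <= INR (a - b).
Proof.
have [ba | ab] := leqP b a; first by rewrite INR_subn //; lra.
rewrite (_ : a - b = 0)%N /=; last by lia.
by have := lt_INR _ _ (ltP ab); lra.
Qed.

Section FallingFactorialRatio.
Variables (u : nat -> nat) (d : nat) (a : R).
Hypotheses (d_gt0 : (0 < d)%N) (lim_u : is_lim_seq (fun n => INR (u n) / INR n ^ d) a).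

Lemma lim_ffact_ratio r : is_lim_seq (fun n => INR (u n ^_ r) / INR n ^ (d * r)) (a ^ r).
Proof.
elim: r => [|r IH].
  apply: (is_lim_seq_ext (fun _ => 1)) => [n|]; last exact: is_lim_seq_const.
  by rewrite ffactn0 muln0 /=; field.
have lim_ur : is_lim_seq (fun n => INR (u n - r) / INR n ^ d) a.
  apply: (is_lim_seq_le_le_loc (fun n => INR (u n) / INR n ^ d - INR r * / INR n ^ d) _
                               (fun n => INR (u n) / INR n ^ d)); last exact: lim_u.
    exists 1%N => n /leP n_gt0; have : 0 < / INR n ^ d.
      by apply/Rinv_0_lt_compat/pow_lt/lt_0_INR/ltP.
    move=> inv_gt0; rewrite /Rdiv -Rmult_minus_distr_r; split; apply: Rmult_le_compat_r; try lra.
      exact: INR_subn_ge.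
    by apply/le_INR/leP; apply: leq_subr.
  have := is_lim_seq_minus' _ _ _ _ lim_u (is_lim_seq_scal_l _ (INR r) _ (lim_inv_pow d d_gt0)).
  by rewrite /= Rmult_0_r Rminus_0_r.
apply: (is_lim_seq_ext_loc (fun n => INR (u n ^_ r) / INR n ^ (d * r) * (INR (u n - r) / INR n ^ d))).
  exists 1%N => n /leP n_gt0; have : 0 < INR n by apply/lt_0_INR/ltP.
  have -> : INR n ^ (d * r.+1) = INR n ^ (d * r) * INR n ^ d.
    by rewrite -pow_add; congr (_ ^ _); lia.
  by rewrite ffactnSr INR_muln => ?; field; split; apply: pow_nonzero; lra.
by have := is_lim_seq_mult' _ _ _ _ IH lim_ur; rewrite Rmult_comm.
Qed.

Lemma lim_bin_ratio r : is_lim_seq (fun n => INR 'C(u n, r) / INR n ^ (d * r)) (a ^ r / INR (fact r)).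
Proof.
apply: (is_lim_seq_ext_loc (fun n => INR (u n ^_ r) / INR n ^ (d * r) / INR (fact r))).
  exists 1%N => n /leP n_gt0; have : 0 < INR n by apply/lt_0_INR/ltP.
  rewrite fact_factorial -bin_ffact INR_muln; have := INR_fact_lt_0 r; rewrite fact_factorial => *.
  by field; split; try apply: pow_nonzero; lra.
apply: (is_lim_seq_div' _ _ _ _ (lim_ffact_ratio r) (is_lim_seq_const _)).
by have := INR_fact_lt_0 r; lra.
Qed.

End FallingFactorialRatio.

Lemma lim_admissible_ratio : is_lim_seq (fun n => INR #|admissible_sites n| / INR n ^ 2) 2.
Proof.
apply: (is_lim_seq_ext_loc (fun n => (1 - 1 * / INR n) * (2 - 3 * / INR n))).
  exists 2%N => n /leP n_ge2; have : 2 <= INR n by apply: (le_INR 2); apply/leP.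
  rewrite card_admissible_sites INR_muln INR_subn ?(INR_muln 2) -?subn1 ?INR_subn; try lia.
  by move=> ?; rewrite /=; field; lra.
have lim_c c e : is_lim_seq (fun n => c - e * / INR n) c.
  have := is_lim_seq_minus' _ _ _ _ (is_lim_seq_const c) (is_lim_seq_scal_l _ e _ lim_inv_INR).
  by rewrite /= Rmult_0_r Rminus_0_r.
by have := is_lim_seq_mult' _ _ _ _ (lim_c 1 1) (lim_c 2 3); rewrite Rmult_1_l.
Qed.

Lemma lim_draws_dfact_ratio s f e m (L : R) : e = (2 * s + f)%N ->
  is_lim_seq (fun n => INR n ^ e * INR (dfact (n - m)) / INR (dfact n)) L ->
  is_lim_seq (fun n => INR n ^ f * INR 'C(#|admissible_sites n|, s) * INR (dfact (n - m)) /
                        INR (dfact n)) (2 ^ s / INR (fact s) * L).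
Proof.
move=> -> lim_d; apply: (is_lim_seq_ext_loc (fun n => INR 'C(#|admissible_sites n|, s) / INR n ^ (2 * s) *
   (INR n ^ (2 * s + f) * INR (dfact (n - m)) / INR (dfact n)))).
  exists 1%N => n /leP n_gt0; have : 0 < INR n by apply/lt_0_INR/ltP.
  have -> : INR n ^ (2 * s + f) = INR n ^ (2 * s) * INR n ^ f by rewrite -pow_add.
  have := dfact_INR_gt0 n => *; by field; split; try apply: pow_nonzero; lra.
exact: is_lim_seq_mult' _ _ _ _ (lim_bin_ratio _ 2%N 2 isT lim_admissible_ratio s) lim_d.
Qed.

Local Notation V n := #|admissible_sites n|.

Lemma lim_main_term r :
  is_lim_seq (fun n => INR ('C(V n, r) * dfact (n - 2 * r)) / INR (dfact n)) ((1 / 2) ^ r / INR (fact r)).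
Proof.
apply: (is_lim_seq_ext (fun n => INR n ^ 0 * INR 'C(V n, r) * INR (dfact (n - 2 * r)) / INR (dfact n)))
  => [n|]; first by rewrite INR_muln /= Rmult_1_l.
have -> : (1 / 2) ^ r / INR (fact r) = 2 ^ r / INR (fact r) * (1 / 2) ^ (2 * r).
  have -> : (1 / 2) ^ (2 * r) = ((1 / 2) ^ 2) ^ r by rewrite -pow_mult.
  rewrite /Rdiv Rmult_assoc (Rmult_comm (/ _)) -Rmult_assoc -Rpow_mult_distr.
  by congr (_ ^ _ * _); field.
by apply: (lim_draws_dfact_ratio r 0 (2 * r)); [rewrite addn0 | apply: lim_dfact_ratio].
Qed.

Lemma lim_error_term r :
  is_lim_seq (fun n => INR ('C(V n, r) * (r * dfact (n - 2 * r - 1))) / INR (dfact n)) 0.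
Proof.
apply: (is_lim_seq_ext (fun n => INR r * (INR n ^ 0 * INR 'C(V n, r) *
                                  INR (dfact (n - (2 * r).+1)) / INR (dfact n)))) => [n|].
  by rewrite !INR_muln subnS subn1 /= /Rdiv; ring.
have := is_lim_seq_scal_l _ (INR r) _ (lim_draws_dfact_ratio r 0 _ _ _ (esym (addn0 _))
  (lim_dfact_ratio_lt (2 * r) (2 * r).+1 (ltnSn _))).
by rewrite /= !Rmult_0_r.
Qed.

Lemma lim_non_sparse_term r :
  is_lim_seq (fun n => INR ((1 < r) * (224 * n ^ 3 * 'C(V n, r - 2)) * dfact (n - 2 * r)) /
                       INR (dfact n)) 0.
Proof.
case: r => [|[|s]].
- by apply: (is_lim_seq_ext (fun _ => 0)) => [n|]; rewrite ?Rdiv_0_l //; apply: is_lim_seq_const.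
- by apply: (is_lim_seq_ext (fun _ => 0)) => [n|]; rewrite ?Rdiv_0_l //; apply: is_lim_seq_const.
apply: (is_lim_seq_ext (fun n => 224 * (INR n ^ 3 * INR 'C(V n, s) *
                                  INR (dfact (n - (2 * s + 4))) / INR (dfact n)))) => [n|].
  rewrite mul1n !INR_muln (INR_IZR_INZ 224) subn2 /= (_ : (2 * s.+2 = 2 * s + 4)%N); last by lia.
  by rewrite /Rdiv; ring.
have := is_lim_seq_scal_l _ 224 _ (lim_draws_dfact_ratio s 3 _ _ _ (erefl (2 * s + 3)%N)
  (lim_dfact_ratio_lt (2 * s + 3) (2 * s + 4) _)).
by rewrite /= !Rmult_0_r; apply; lia.
Qed.

Lemma lim_fmoment p r :
  is_lim_seq (fun n => INR (fmoment p n r) / INR (dfact n)) ((1 / 2) ^ r / INR (fact r)).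
Proof.
pose main n := INR ('C(V n, r) * dfact (n - 2 * r)) / INR (dfact n).
pose err n := INR ('C(V n, r) * (r * dfact (n - 2 * r - 1))) / INR (dfact n) +
  INR ((1 < r) * (224 * n ^ 3 * 'C(V n, r - 2)) * dfact (n - 2 * r)) / INR (dfact n).
apply: (is_lim_seq_le_le (fun n => main n - err n) _ main) => [n | | ]; last exact: lim_main_term.
  have Dinv_gt0 := Rinv_0_lt_compat _ (dfact_INR_gt0 n).
  have /leP/le_INR upper := fmoment_le p n r.
  have /leP/le_INR : ('C(V n, r) * dfact (n - 2 * r) <= fmoment p n r +
      'C(V n, r) * (r * dfact (n - 2 * r - 1)) +
      (1 < r) * (224 * n ^ 3 * 'C(V n, r - 2)) * dfact (n - 2 * r))%N.
    apply: leq_trans (fmoment_ge p n r) _; rewrite leq_add2l leq_mul2r; apply/orP; right.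
    by apply: leq_trans (non_sparse_le n r) _; rewrite leq_mul2l leq_mul2r card_close_pairs !orbT.
  rewrite !INR_addn /main /err /Rdiv => lower; split; nra.
have := is_lim_seq_minus' _ _ _ _ (lim_main_term r)
  (is_lim_seq_plus' _ _ _ _ (lim_error_term r) (lim_non_sparse_term r)).
by rewrite Rplus_0_r Rminus_0_r.
Qed.

Lemma is_lim_seq_sandwich (u : nat -> R) (L : R) :
  (forall eps, 0 < eps -> exists (l w : nat -> R) (ll lw : R),
     [/\ forall n, l n <= u n <= w n, is_lim_seq l ll, is_lim_seq w lw &
         L - eps <= ll /\ lw <= L + eps]) ->
  is_lim_seq u L.
Proof.
move=> approx; apply/is_lim_seq_spec => eps.
have [|l [w [ll [lw [luw /is_lim_seq_spec lim_l /is_lim_seq_spec lim_w [hl hw]]]]]] :=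
  approx (eps / 2); first by have := cond_pos eps; lra.
apply: filter_imp (filter_and _ _ (lim_l (pos_div_2 eps)) (lim_w (pos_div_2 eps))) => n /=.
move=> [/Rabs_def2 [l1 l2] /Rabs_def2 [w1 w2]]; have [lu uw] := luw n.
by apply: Rabs_def1; lra.
Qed.

Lemma pow_neg1 t : (-1) ^ t = if odd t then -1 else 1.
Proof. by elim: t => //= t ->; case: (odd t) => /=; ring. Qed.

Lemma lim_exp_partial_sum x :
  is_lim_seq (fun t => sum_f_R0 (fun j => / INR (fact j) * x ^ j) t) (exp x).
Proof. by apply/is_lim_seq_Reals; apply: (proj2_sig (exist_exp x)). Qed.

Section PoissonLimit.
Variables (ys : nat -> seq nat) (D : nat -> R) (lam : R).
Local Notation fmoment n r := (\sum_(y <- ys n) 'C(y, r)).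
Hypotheses (D_gt0 : forall n, 0 < D n)
  (lim_fmoment : forall r, is_lim_seq (fun n => INR (fmoment n r) / D n) (lam ^ r / INR (fact r))).

Definition alt_sum k t n := (INR (bonferroni_sum (fun j => ~~ odd j) k t (fun r => fmoment n r)) -
                             INR (bonferroni_sum odd k t (fun r => fmoment n r))) / D n.

Lemma bonferroni_sum_seq P k t n :
  bonferroni_sum P k t (fun r => fmoment n r) = (\sum_(y <- ys n) bonferroni_sum P k t (binomial y))%N.
Proof. by rewrite /bonferroni_sum exchange_big; apply: eq_bigr => j _; rewrite big_distrr. Qed.

Lemma count_memE k n : count_mem k (ys n) = (\sum_(y <- ys n) (y == k))%N.
Proof. by rewrite -sum1_count big_mkcond; apply: eq_bigr => y _ /=; case: (y == k). Qed.

Lemma alt_sum_ge k t n : ~~ odd t -> INR (count_mem k (ys n)) / D n <= alt_sum k t n.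
Proof.
move=> t_even; apply: Rmult_le_compat_r; first exact/Rlt_le/Rinv_0_lt_compat.
suff /leP/le_INR : (count_mem k (ys n) + bonferroni_sum odd k t (fun r => fmoment n r) <=
                    bonferroni_sum (fun j => ~~ odd j) k t (fun r => fmoment n r))%N.
  by rewrite INR_addn; lra.
rewrite count_memE !bonferroni_sum_seq -big_split /=.
by apply: leq_sum => y _; apply: bonferroni_even.
Qed.

Lemma alt_sum_le k t n : odd t -> alt_sum k t n <= INR (count_mem k (ys n)) / D n.
Proof.
move=> t_odd; apply: Rmult_le_compat_r; first exact/Rlt_le/Rinv_0_lt_compat.
suff /leP/le_INR : (bonferroni_sum (fun j => ~~ odd j) k t (fun r => fmoment n r) <=
                    count_mem k (ys n) + bonferroni_sum odd k t (fun r => fmoment n r))%N.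
  by rewrite INR_addn; lra.
rewrite count_memE !bonferroni_sum_seq -big_split /=.
by apply: leq_sum => y _; apply: bonferroni_odd.
Qed.

Lemma lim_alt_sum k t : is_lim_seq (alt_sum k t)
  (lam ^ k / INR (fact k) * sum_f_R0 (fun j => / INR (fact j) * (- lam) ^ j) t).
Proof.
have fact_gt0 := INR_fact_lt_0.
elim: t => [|t IH].
  apply: (is_lim_seq_ext (fun n => INR (fmoment n k) / D n)) => [n|].
    by rewrite /alt_sum !bonferroni_sum0 /= mul1n Rminus_0_r.
  by rewrite /= Rinv_1 !Rmult_1_r; apply: lim_fmoment.
apply: (is_lim_seq_ext (fun n => alt_sum k t n +
  (-1) ^ t.+1 * INR 'C(k + t.+1, k) * (INR (fmoment n (k + t.+1)) / D n))) => [n|].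
  rewrite /alt_sum !bonferroni_sumS !INR_addn !INR_muln /=.
  by rewrite pow_neg1 /=; case: (odd t) => /=; rewrite /Rdiv; ring.
have -> : lam ^ k / INR (fact k) * sum_f_R0 (fun j => / INR (fact j) * (- lam) ^ j) t.+1 =
  lam ^ k / INR (fact k) * sum_f_R0 (fun j => / INR (fact j) * (- lam) ^ j) t +
  (-1) ^ t.+1 * INR 'C(k + t.+1, k) * (lam ^ (k + t.+1) / INR (fact (k + t.+1))).
  have := bin_fact (leq_addr t.+1 k); rewrite addKn -!fact_factorial => /(congr1 INR).
  rewrite !INR_muln => <-.
  have -> : lam ^ (k + t.+1) = lam ^ k * lam ^ t.+1 by rewrite -pow_add.
  rewrite tech5; cbv beta.
  have -> : (- lam) ^ t.+1 = (-1) ^ t.+1 * lam ^ t.+1.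
    by rewrite -Rpow_mult_distr; congr (_ ^ _); ring.
  have binC : INR 'C(k + t.+1, k) <> 0.
    by apply: not_0_INR; apply/eqP; rewrite -lt0n bin_gt0 leq_addr.
  by field; split; [|split]; [apply: INR_fact_neq_0 | apply: INR_fact_neq_0 | exact: binC].
have /= lim_new := is_lim_seq_scal_l _ ((-1) ^ t.+1 * INR 'C(k + t.+1, k)) _ (lim_fmoment (k + t.+1)).
exact: is_lim_seq_plus' _ _ _ _ IH lim_new.
Qed.


Lemma lim_count_mem k :
  is_lim_seq (fun n => INR (count_mem k (ys n)) / D n) (exp (- lam) * lam ^ k / INR (fact k)).
Proof.
pose c := lam ^ k / INR (fact k).
pose S t := sum_f_R0 (fun j => / INR (fact j) * (- lam) ^ j) t.
have -> : exp (- lam) * lam ^ k / INR (fact k) = c * exp (- lam) by rewrite /c /Rdiv; ring.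
have /is_lim_seq_spec lim_cS : is_lim_seq (fun t => c * S t) (c * exp (- lam)).
  exact: is_lim_seq_scal_l _ c _ (lim_exp_partial_sum (- lam)).
apply: is_lim_seq_sandwich => eps eps_gt0; have [T closeT] := lim_cS (mkposreal eps eps_gt0).
exists (alt_sum k (2 * T)%N.+1), (alt_sum k (2 * T)%N), (c * S (2 * T)%N.+1), (c * S (2 * T)%N).
have odd_2T : odd (2 * T)%N = false by rewrite oddM.
split; [move=> n; split | exact: lim_alt_sum | exact: lim_alt_sum | ].
- by apply: alt_sum_le; rewrite /= odd_2T.
- by apply: alt_sum_ge; rewrite odd_2T.
have /Rabs_def2[] /= := closeT (2 * T)%N.+1 ltac:(lia).
have /Rabs_def2[] /= := closeT (2 * T)%N ltac:(lia).
by lra.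
Qed.

End PoissonLimit.

Lemma lim_chain_matchings p :
  is_lim_seq (fun n => INR #|chain_matchings p n| / INR (dfact n)) 0.
Proof.
apply: (is_lim_seq_le_le (fun _ => 0) _ (fun n => INR (4 * n ^ 2 * dfact (n - 3)) / INR (dfact n)))
  => [n | | ]; first split.
- by apply: Rdiv_le_0_compat; [apply: pos_INR | apply: dfact_INR_gt0].
- apply: Rmult_le_compat_r; first exact/Rlt_le/Rinv_0_lt_compat/dfact_INR_gt0.
  by apply/le_INR/leP; apply: card_chain_matchings.
- exact: is_lim_seq_const.
apply: (is_lim_seq_ext (fun n => 4 * (INR n ^ 2 * INR (dfact (n - 3)) / INR (dfact n)))) => [n|].
  by rewrite 2!INR_muln INR_expn (INR_IZR_INZ 4) /= /Rdiv; ring.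
have := is_lim_seq_scal_l _ 4 _ (lim_dfact_ratio_lt 2 3 isT).
by rewrite /= Rmult_0_r.
Qed.

Definition chain_start_sizes p n :=
  [seq #|chain_starts p M| | M <- enum [set M : {set 'I_(2 * n) * 'I_(2 * n)} | is_matching M]].

Lemma count_chain_start_sizes p n k : count_mem k (chain_start_sizes p n) = start_count p n k.
Proof. by rewrite -sum1_count big_map big_enum_cond sum1dep_card; apply: eq_card => M; rewrite !inE. Qed.

Lemma sum_chain_start_sizes p n r :
  (\sum_(y <- chain_start_sizes p n) 'C(y, r))%N = fmoment p n r.
Proof. by rewrite big_map big_enum; apply: eq_bigl => M; rewrite !inE. Qed.

Theorem corollary4 (p : pattern) (k : nat) :
  Un_cv (fun n : nat => INR (a_count p n k) / INR (dfact n))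
        (exp (- (1 / 2)) / (2 ^ k * INR (fact k))).
Proof.
apply/is_lim_seq_Reals.
have -> : exp (- (1 / 2)) / (2 ^ k * INR (fact k)) = exp (- (1 / 2)) * (1 / 2) ^ k / INR (fact k).
  by rewrite /Rdiv Rmult_1_l pow_inv Rinv_mult; ring.
pose starts n := INR (start_count p n k) / INR (dfact n).
pose chains n := INR #|chain_matchings p n| / INR (dfact n).
have lim_starts : is_lim_seq starts (exp (- (1 / 2)) * (1 / 2) ^ k / INR (fact k)).
  apply: (is_lim_seq_ext (fun n => INR (count_mem k (chain_start_sizes p n)) / INR (dfact n))).
    by move=> n; rewrite count_chain_start_sizes.
  apply: lim_count_mem => [n | r]; first exact: dfact_INR_gt0.
  by apply: (is_lim_seq_ext _ _ _ _ (lim_fmoment p r)) => n; rewrite sum_chain_start_sizes.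
apply: (is_lim_seq_le_le (fun n => starts n - chains n) _ (fun n => starts n + chains n)) => [n | |].
- rewrite /starts /chains.
  have Dinv := Rinv_0_lt_compat _ (dfact_INR_gt0 n).
  have /leP/le_INR := a_count_le p n k; have /leP/le_INR := start_count_le p n k.
  rewrite !INR_addn /Rdiv => *; split; nra.
- by have := is_lim_seq_minus' _ _ _ _ lim_starts (lim_chain_matchings p); rewrite Rminus_0_r.
- by have := is_lim_seq_plus' _ _ _ _ lim_starts (lim_chain_matchings p); rewrite Rplus_0_r.
Qed.
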